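(* Let $n\ge1$ and $d\ge2$ be integers. Let $T$ be any rooted tree that contains, as a topological minor, every rooted tree with $n$ leaves and no degree-1 nodes. Then the number of nodes of $T$ of degree at least $d$ is at least $$\sum_{s\ge2,\ (s-1)(d-1)+1\le n} u\big(\lfloor n/((s-1)(d-1)+1)\rfloor\big).$$ Here $u(m)$ denotes the minimum number of leaves of a rooted tree that contains, as a topological minor, every rooted tree with $m$ leaves and no degree-1 nodes.
   Context: Trees are rooted and unordered, with edges directed from parent to child. The degree of a node is its number of children; a degree-1 node has exactly one child. $T'$ is a topological minor of $T$ if there is an injective map $f$ from the nodes of $T'$ to the nodes of $T$ with $f(\mathsf{NCA}(u,v))=\mathsf{NCA}(f(u),f(v))$ for all $u,v$. Equivalently, $T$ contains a subdivision of $T'$ as a subgraph. $\mathsf{NCA}$ denotes the nearest common ancestor. *)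

From mathcomp Require Import all_boot.
From Stdlib Require Import ClassicalEpsilon.
Set Implicit Arguments. Unset Strict Implicit. Unset Printing Implicit Defensive.

(* Finite rooted trees; the order of children is irrelevant for every notion
   below (all are invariant under permuting children), so these model rooted
   unordered trees. *)
Inductive rtree := Node of seq rtree.

Definition children (t : rtree) : seq rtree := let: Node ts := t in ts.

(* Nodes are addressed by paths from the root: a path [:: i1; ...; ik]
   selects child i1 of the root, then child i2 of that, etc. *)
Fixpoint subt (t : rtree) (p : seq nat) : option rtree :=
  match p with
  | [::] => Some t
  | i :: p' => if i < size (children t) then subt (nth t (children t) i) p'
               else None
  end.

Definition is_node (t : rtree) (p : seq nat) : bool := isSome (subt t p).

(* ancestor-or-self = prefix; nearest common ancestor = longest common prefix *)
Fixpoint nca (p q : seq nat) : seq nat :=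
  match p, q with
  | a :: p', b :: q' => if a == b then a :: nca p' q' else [::]
  | _, _ => [::]
  end.

Definition top_minor (T' T : rtree) : Prop :=
  exists f : seq nat -> seq nat,
    (forall u, is_node T' u -> is_node T (f u)) /\
    (forall u v, is_node T' u -> is_node T' v -> f u = f v -> u = v) /\
    (forall u v, is_node T' u -> is_node T' v -> f (nca u v) = nca (f u) (f v)).

Fixpoint nleaves (t : rtree) : nat :=
  let: Node ts := t in if ts is [::] then 1 else sumn (map nleaves ts).

Fixpoint no_deg1 (t : rtree) : bool :=
  let: Node ts := t in (size ts != 1) && all no_deg1 ts.

(* number of nodes of degree (number of children) at least d *)
Fixpoint nbig (d : nat) (t : rtree) : nat :=
  let: Node ts := t in (d <= size ts) + sumn (map (nbig d) ts).

Definition universal (m : nat) (T : rtree) : Prop :=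
  forall T', nleaves T' = m -> no_deg1 T' -> top_minor T' T.

Definition is_min_universal_leaves (m k : nat) : Prop :=
  (exists T, universal m T /\ nleaves T = k) /\
  (forall T, universal m T -> k <= nleaves T).

Definition u (m : nat) : nat :=
  epsilon (inhabits 0) (is_min_universal_leaves m).

(* For c >= 1, let the big depth of a node be the largest number of nodes of
   degree >= d on a downward path starting at it, and call a node c-critical if
   it has degree >= d and big depth exactly c.  A node is critical for at most
   one c, so it suffices to find u(n / K) c-critical nodes in T for each c with
   K = c(d-1)+1 <= n.  They are the leaves of the trunk of T: the nodes of big
   depth >= c, with the c-critical ones cut down to leaves.  The trunk is
   universal for n / K leaves: given S, replace every leaf of S by a caterpillar
   with c nodes of degree d (hence K leaves) and add n mod K leaves at the root.
   The resulting tree has n leaves, so it embeds in T; embeddings do not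
   decrease big depth, so the nodes of S are sent into the trunk. *)

From HB Require Import structures.
From mathcomp Require Import all_boot zify.
From Stdlib Require Import ClassicalEpsilon Wf_nat.
Set Implicit Arguments. Unset Strict Implicit. Unset Printing Implicit Defensive.

Lemma count_take_leq T (a : pred T) s i j : i <= j ->
  count a (take i s) <= count a (take j s).
Proof.
by elim: s i j => [|y s IH] [|i] [|j] //= le_ij; rewrite leq_add2l IH.
Qed.

Lemma count_take_ltn T (a : pred T) x0 s i j : i < size s -> a (nth x0 s i) -> i < j ->
  count a (take i s) < count a (take j s).
Proof.
move=> i_lt a_i lt_ij; apply: leq_trans (count_take_leq _ _ lt_ij).
by rewrite (take_nth x0 i_lt) -cats1 count_cat /= a_i addn1.
Qed.

Lemma count_take_inj T (a : pred T) x0 s i j : i < size s -> j < size s ->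
  a (nth x0 s i) -> a (nth x0 s j) -> count a (take i s) = count a (take j s) -> i = j.
Proof.
move=> i_lt j_lt a_i a_j eq_ij.
case: (ltngtP i j) => // [/(count_take_ltn i_lt a_i)|/(count_take_ltn j_lt a_j)];
  by rewrite eq_ij ltnn.
Qed.

Lemma nth_filter_count T (a : pred T) x0 s i : i < size s -> a (nth x0 s i) ->
  nth x0 (filter a s) (count a (take i s)) = nth x0 s i.
Proof.
elim: s i => [|y s IH] [|i] //= i_lt a_i; first by rewrite a_i.
by case: (a y); rewrite /= ?add1n ?IH.
Qed.

Lemma sum_eq_le1 (T : eqType) (r : seq T) x : uniq r -> \sum_(y <- r) (x == y) <= 1.
Proof.
move=> uniq_r; have -> : \sum_(y <- r) (x == y) = count (pred1 x) r.
  by rewrite -sum1_count [RHS]big_mkcond; apply: eq_bigr => y _; rewrite eq_sym.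
by rewrite count_uniq_mem ?leq_b1.
Qed.

Notation leaf := (Node [::]).

Fixpoint rtree_to_gentree (t : rtree) : GenTree.tree unit :=
  let: Node ts := t in GenTree.Node 0 (map rtree_to_gentree ts).

Fixpoint gentree_to_rtree (t : GenTree.tree unit) : rtree :=
  if t is GenTree.Node _ ts then Node (map gentree_to_rtree ts) else leaf.

Lemma rtree_to_gentreeK : cancel rtree_to_gentree gentree_to_rtree.
Proof.
rewrite /cancel; fix self 1; case=> ts /=; congr Node.
by elim: ts => //= t ts ->; rewrite self.
Qed.

HB.instance Definition _ := Countable.copy rtree (can_type rtree_to_gentreeK).

Lemma rtree_ind_mem (P : rtree -> Prop) :
  (forall ts, {in ts, forall x, P x} -> P (Node ts)) -> forall t, P t.
Proof.
move=> IH; fix self 1; case=> ts; apply: IH.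
(* not [done], which would close this goal with the unguarded call [self x] *)
elim: ts => [|y ys IHys] x; first (rewrite in_nil; discriminate).
by rewrite in_cons => /predU1P [->|]; [exact: self | exact: IHys].
Qed.

Lemma ncaC p q : nca p q = nca q p.
Proof. by elim: p q => [|a p IH] [|b q] //=; rewrite eq_sym IH; case: eqP => [->|]. Qed.

Lemma nca_id p : nca p p = p.
Proof. by elim: p => //= a p ->; rewrite eqxx. Qed.

Lemma nca_prefix p q : exists a, p = nca p q ++ a.
Proof.
elim: p q => [|a p IH] [|b q] /=; try by eexists.
case: eqP => _; last by eexists.
by have [a' {1}->] := IH q; exists a'.
Qed.

Lemma nca_catr p a : nca p (p ++ a) = p.
Proof. by elim: p => //= x p ->; rewrite eqxx. Qed.

Lemma nca_catl w p q : nca (w ++ p) (w ++ q) = w ++ nca p q.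
Proof. by elim: w => //= x w ->; rewrite eqxx. Qed.

Lemma nca_size_eq p q : size (nca p q) = size p -> nca p q = p.
Proof.
have [[|x a] def_p] := nca_prefix p q; first by rewrite cats0 in def_p; rewrite -def_p.
by move: (congr1 size def_p); rewrite size_cat /=; lia.
Qed.

Lemma subt_cat t p a x : subt t p = Some x -> subt t (p ++ a) = subt x a.
Proof.
elim: p t => [|i p IH] t /=; first by case=> ->.
by case: ifP => // _; apply: IH.
Qed.

Lemma subt_child t p x i : subt t p = Some x -> i < size (children x) ->
  subt t (p ++ [:: i]) = Some (nth leaf (children x) i).
Proof.
by move=> tp_x i_lt; rewrite (subt_cat _ tp_x) /= i_lt (set_nth_default leaf).
Qed.

Definition embedding (A T : rtree) (f : seq nat -> seq nat) : Prop :=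
  [/\ forall u, is_node A u -> is_node T (f u),
      forall u v, is_node A u -> is_node A v -> f u = f v -> u = v &
      forall u v, is_node A u -> is_node A v -> f (nca u v) = nca (f u) (f v)].

Lemma top_minorP A T : top_minor A T <-> exists f, embedding A T f.
Proof. by split=> [[f [? [? ?]]]|[f [? ? ?]]]; exists f. Qed.

Lemma embedding_sub A B T f : (forall u, is_node B u -> is_node A u) ->
  embedding A T f -> embedding B T f.
Proof.
by move=> BA [f_node f_inj f_nca]; split=> [u /BA|u v /BA + /BA|u v /BA + /BA]; auto.
Qed.

Section Embedding.
Variables (A T : rtree) (f : seq nat -> seq nat).
Hypothesis f_emb : embedding A T f.

Definition branch u i := nth 0 (f (u ++ [:: i])) (size (f u)).

Lemma embedding_child u x i : subt A u = Some x -> i < size (children x) ->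
  exists r, f (u ++ [:: i]) = f u ++ branch u i :: r.
Proof.
move=> Au i_lt; have [_ f_inj f_nca] := f_emb.
have node_u : is_node A u by rewrite /is_node Au.
have node_ui : is_node A (u ++ [:: i]) by rewrite /is_node (subt_child Au i_lt).
have [[|j r] def_fui] := nca_prefix (f (u ++ [:: i])) (f u).
  rewrite ncaC -f_nca // nca_catr cats0 in def_fui.
  move/(congr1 size): (f_inj _ _ node_ui node_u def_fui).
  by rewrite size_cat addn1 => /esym/n_Sn.
rewrite ncaC -f_nca // nca_catr in def_fui.
by exists r; rewrite /branch def_fui nth_cat ltnn subnn.
Qed.

Lemma branch_lt u x y i : subt A u = Some x -> subt T (f u) = Some y ->
  i < size (children x) -> branch u i < size (children y).
Proof.
move=> Au Tfu i_lt; have [f_node _ _] := f_emb.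
have := f_node (u ++ [:: i]); rewrite /is_node (subt_child Au i_lt) => /(_ erefl).
have [r ->] := embedding_child Au i_lt; rewrite (subt_cat _ Tfu).
by case: y {Tfu} => ys /=; case: ifP.
Qed.

Lemma branch_inj u x i j : subt A u = Some x ->
  i < size (children x) -> j < size (children x) -> branch u i = branch u j -> i = j.
Proof.
move=> Au i_lt j_lt eq_branch; have [_ _ f_nca] := f_emb.
apply/eqP; apply: contraT => neq_ij.
have := f_nca (u ++ [:: i]) (u ++ [:: j]).
rewrite /is_node !(subt_child Au) // nca_catl /= (negbTE neq_ij) cats0 => /(_ erefl erefl).
have [r ->] := embedding_child Au i_lt; have [r' ->] := embedding_child Au j_lt.
by rewrite eq_branch nca_catl /= eqxx => /(congr1 size); rewrite size_cat /=; lia.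
Qed.

Lemma size_children_embedding u x y : subt A u = Some x -> subt T (f u) = Some y ->
  size (children x) <= size (children y).
Proof.
move=> Au Tfu; rewrite -(size_iota 0 (size (children x))) -(size_map (branch u)).
rewrite -(size_iota 0 (size (children y))) uniq_leq_size //.
  rewrite map_inj_in_uniq ?iota_uniq // => i j.
  by rewrite !mem_iota /= !add0n; exact: branch_inj Au.
move=> k /mapP [i]; rewrite !mem_iota /= !add0n => i_lt ->.
exact: branch_lt Au Tfu i_lt.
Qed.

End Embedding.

Lemma u_le_nleaves m X : universal m X -> u m <= nleaves X.
Proof.
move=> univ_X.
pose P k := exists Y, universal m Y /\ nleaves Y = k.
have [k [[P_k k_min] _]] : has_unique_least_element le P.
  apply: dec_inh_nat_subset_has_unique_least_element => [k|]; first exact: classic.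
  by exists (nleaves X), X.
have [_ u_le] : is_min_universal_leaves m (u m).
  apply: epsilon_spec; exists k; split=> // Y univ_Y.
  by apply/leP/k_min; exists Y.
exact: u_le.
Qed.

Definition star (m : nat) : rtree := if m is 1 then leaf else Node (nseq m leaf).

Lemma nleaves_star m : 0 < m -> nleaves (star m) = m.
Proof. by case: m => [|[|m]] //= _; rewrite map_nseq sumn_nseq mul1n. Qed.

Lemma no_deg1_star m : no_deg1 (star m).
Proof. by case: m => [|[|m]] //=; elim: m. Qed.

Lemma nleavesE ts : ts != [::] -> nleaves (Node ts) = \sum_(x <- ts) nleaves x.
Proof. by case: ts => //= y ys _; rewrite big_cons sumnE big_map. Qed.

Definition pad (r : nat) (t : rtree) : rtree := Node (children t ++ nseq r leaf).

Lemma nleaves_pad r t : children t != [::] -> nleaves (pad r t) = nleaves t + r.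
Proof.
case: t => [[|y ys]] // _.
by rewrite /pad /= map_cat sumn_cat map_nseq sumn_nseq mul1n addnA.
Qed.

Lemma no_deg1_pad r t : no_deg1 t -> 1 < size (children t) -> no_deg1 (pad r t).
Proof.
case: t => ts /= /andP [_ nd_ts] size_gt1.
by rewrite size_cat size_nseq all_cat nd_ts all_nseq orbT andbT; lia.
Qed.

Lemma subt_pad r t i u x : subt t (i :: u) = Some x -> subt (pad r t) (i :: u) = Some x.
Proof.
case: t => ts /=; case: ifP => // i_lt.
by rewrite size_cat ltn_addr // nth_cat i_lt (set_nth_default (Node ts)).
Qed.

Section BigDepth.
Variable d : nat.

Fixpoint big_depth (t : rtree) : nat :=
  let: Node ts := t in (d <= size ts) + foldr maxn 0 (map big_depth ts).

Lemma big_depthE ts :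
  big_depth (Node ts) = (d <= size ts) + \max_(x <- ts) big_depth x.
Proof. by rewrite /= foldrE big_map. Qed.

Lemma big_depth_child ts x : x \in ts -> big_depth x <= big_depth (Node ts).
Proof.
by move=> x_in; rewrite big_depthE (leq_trans (leq_bigmax_seq _ x_in isT)) ?leq_addl.
Qed.

Lemma big_depth_subt t p x : subt t p = Some x -> big_depth x <= big_depth t.
Proof.
elim: p t => [|i p IH] [ts] /=; first by case=> <-.
case: ifP => // i_lt /IH /leq_trans; apply.
by rewrite (set_nth_default leaf) // big_depth_child ?mem_nth.
Qed.

Lemma big_depth_embedding A T f u x : embedding A T f -> subt A u = Some x ->
  exists2 y, subt T (f u) = Some y & big_depth x <= big_depth y.
Proof.
move=> f_emb; elim/rtree_ind_mem: x u => xs IH u Au.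
have [f_node _ _] := f_emb.
have := f_node u; rewrite /is_node Au => /(_ erefl).
case Tfu: (subt T (f u)) => [[ys]|] // _; exists (Node ys) => //.
have le_size := size_children_embedding f_emb Au Tfu.
rewrite !big_depthE leq_add //.
  by case: (leqP d (size xs)) => // /leq_trans/(_ le_size) ->.
apply/bigmax_leqP_seq => x /(nthP leaf) [i i_lt <-] _.
have [r Er] := embedding_child f_emb Au i_lt.
have [z] := IH _ (mem_nth leaf i_lt) _ (subt_child Au i_lt).
rewrite Er (subt_cat _ Tfu) /=; case: ifP => // b_lt Tz /leq_trans; apply.
apply: leq_trans (big_depth_subt Tz) _.
by rewrite (set_nth_default leaf) // (leq_bigmax_seq _ (mem_nth leaf b_lt) isT).
Qed.

Lemma big_depth_pad r t : big_depth t <= big_depth (pad r t).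
Proof.
case: t => ts; rewrite /pad !big_depthE size_cat big_cat /= leq_add ?leq_maxl //.
by case: (leqP d (size ts)) => // /leq_trans ->; rewrite ?leq_addr.
Qed.

Section Trunk.
Variable c : nat.
Hypothesis c_gt0 : 0 < c.

Definition tall (x : rtree) : bool := c <= big_depth x.

Definition critical (t : rtree) : bool :=
  (d <= size (children t)) && (big_depth t == c).

(* [foldr] rather than [map trunk (filter tall ts)] keeps the recursion
   structural; see [trunkE]. *)
Fixpoint trunk (t : rtree) : rtree :=
  let: Node ts := t in
  if critical (Node ts) then leaf
  else Node (foldr (fun x acc => if tall x then trunk x :: acc else acc) [::] ts).

Lemma trunkE ts : trunk (Node ts) =
  if critical (Node ts) then leaf else Node (map trunk (filter tall ts)).
Proof. by rewrite /=; case: ifP => // _; congr Node; elim: ts => //= x ts ->; case: ifP. Qed.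

Fixpoint ncritical (t : rtree) : nat :=
  let: Node ts := t in critical (Node ts) + sumn (map ncritical ts).

Lemma ncriticalE ts :
  ncritical (Node ts) = critical (Node ts) + \sum_(x <- ts) ncritical x.
Proof. by rewrite /= sumnE big_map. Qed.

Lemma critical_child ts x : critical (Node ts) -> x \in ts -> big_depth x < c.
Proof.
rewrite /critical big_depthE /= => /andP [-> /eqP <-] x_in.
by rewrite add1n ltnS (leq_bigmax_seq _ x_in isT).
Qed.

Lemma ncritical_short t : big_depth t < c -> ncritical t = 0.
Proof.
elim/rtree_ind_mem: t => ts IH lt_c.
rewrite ncriticalE /critical (ltn_eqF lt_c) andbF add0n big1_seq // => x /andP [_ x_in].
exact/IH/(leq_ltn_trans (big_depth_child x_in)).
Qed.

Lemma has_tall_child ts : tall (Node ts) -> ~~ critical (Node ts) -> has tall ts.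
Proof.
rewrite /tall /critical big_depthE /= => tall_t; apply: contraR.
rewrite -all_predC => /allP short.
have : \max_(x <- ts) big_depth x <= c.-1.
  by apply/bigmax_leqP_seq => x /short /=; rewrite -ltnNge; lia.
by move: tall_t; case: (d <= size ts) => /=; lia.
Qed.

Lemma nleaves_trunk t : tall t -> nleaves (trunk t) = ncritical t.
Proof.
elim/rtree_ind_mem: t => ts IH tall_t.
rewrite trunkE ncriticalE; case: ifPn => [crit_t|ncrit_t].
  by rewrite big1_seq // => x /andP [_ /(critical_child crit_t)/ncritical_short].
have has_tall := has_tall_child tall_t ncrit_t.
rewrite nleavesE; last by rewrite -size_eq0 size_map size_filter -lt0n -has_count.
rewrite add0n big_map big_filter [RHS](bigID tall) /= [X in _ + X]big1_seq ?addn0; last first.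
  by move=> y /andP [short_y _]; rewrite ncritical_short // ltnNge.
by rewrite big_seq_cond [RHS]big_seq_cond; apply: eq_bigr => y /andP [y_in tall_y]; apply: IH.
Qed.

Fixpoint trunk_path (t : rtree) (p : seq nat) : seq nat :=
  if p is i :: p' then
    count tall (take i (children t)) :: trunk_path (nth leaf (children t) i) p'
  else [::].

Definition tall_node (t : rtree) (p : seq nat) : Prop :=
  exists2 x, subt t p = Some x & tall x.

Lemma tall_node_cons ts i p : tall_node (Node ts) (i :: p) ->
  [/\ i < size ts, tall (nth leaf ts i), tall_node (nth leaf ts i) p
    & ~~ critical (Node ts)].
Proof.
case=> x /=; case: ifP => // i_lt; rewrite (set_nth_default leaf) // => sub_x tall_x.
have tall_i : tall (nth leaf ts i) := leq_trans tall_x (big_depth_subt sub_x).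
split=> //; first by exists x.
by apply: contraTN tall_i => /critical_child/(_ (mem_nth leaf i_lt)); rewrite /tall ltnNge.
Qed.

Lemma is_node_trunk_path t p : tall_node t p -> is_node (trunk t) (trunk_path t p).
Proof.
elim: p t => [|i p IH] [ts] tall_p //.
have [i_lt tall_i tall_p' ncrit] := tall_node_cons tall_p.
have lt_count : count tall (take i ts) < size (filter tall ts).
  by rewrite size_filter -{2}(take_size ts) (count_take_ltn i_lt tall_i).
rewrite trunkE (negbTE ncrit) /is_node /= size_map lt_count.
rewrite (set_nth_default (trunk leaf)) ?size_map // (nth_map leaf) //.
by rewrite nth_filter_count //; apply: IH.
Qed.

Lemma trunk_path_nca t p q : tall_node t p -> tall_node t q ->
  trunk_path t (nca p q) = nca (trunk_path t p) (trunk_path t q).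
Proof.
elim: p t q => [|i p IH] [ts] [|j q] //= tall_p tall_q.
have [i_lt tall_i tall_p' _] := tall_node_cons tall_p.
have [eq_ij|neq_ij] := eqVneq i j.
  subst j; have [_ _ tall_q' _] := tall_node_cons tall_q.
  by rewrite eqxx /= (IH _ _ tall_p' tall_q').
have [j_lt tall_j _ _] := tall_node_cons tall_q.
case: eqP => // /(count_take_inj i_lt j_lt tall_i tall_j) eq_ij.
by rewrite eq_ij eqxx in neq_ij.
Qed.

Lemma size_trunk_path t p : size (trunk_path t p) = size p.
Proof. by elim: p t => //= i p IH t; rewrite IH. Qed.

Lemma trunk_path_inj t p q : tall_node t p -> tall_node t q ->
  trunk_path t p = trunk_path t q -> p = q.
Proof.
move=> tall_p tall_q eq_pq.
have nca_eq := trunk_path_nca tall_p tall_q; rewrite eq_pq nca_id in nca_eq.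
have /nca_size_eq nca_p : size (nca p q) = size p.
  by rewrite -(size_trunk_path t) nca_eq -eq_pq size_trunk_path.
have /nca_size_eq nca_q : size (nca q p) = size q.
  by rewrite ncaC -(size_trunk_path t) nca_eq size_trunk_path.
by rewrite -nca_p -[RHS]nca_q ncaC.
Qed.

Lemma top_minor_trunk S T f : embedding S T f ->
  (forall u, is_node S u -> tall_node T (f u)) -> top_minor S (trunk T).
Proof.
move=> [_ f_inj f_nca] tall_f; apply/top_minorP; exists (trunk_path T \o f).
split=> [u /tall_f /is_node_trunk_path //|u v Su Sv /=|u v Su Sv /=].
  by move/(trunk_path_inj (tall_f _ Su) (tall_f _ Sv)); apply: f_inj.
by rewrite f_nca // trunk_path_nca //; apply: tall_f.
Qed.

Hypothesis d_gt1 : 1 < d.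

Fixpoint caterpillar (k : nat) : rtree :=
  if k is k'.+1 then Node (caterpillar k' :: nseq (d - 1) leaf) else leaf.

Lemma big_depth_caterpillar k : k <= big_depth (caterpillar k).
Proof.
elim: k => //= k IH; rewrite size_nseq (_ : d <= (d - 1).+1) ?add1n; last by lia.
by rewrite ltnS (leq_trans IH) ?leq_maxl.
Qed.

Lemma nleaves_caterpillar k : nleaves (caterpillar k) = k * (d - 1) + 1.
Proof. by elim: k => //= k ->; rewrite map_nseq sumn_nseq mul1n mulSn; lia. Qed.

Lemma no_deg1_caterpillar k : no_deg1 (caterpillar k).
Proof.
elim: k => //= k ->; rewrite size_nseq eqSS -lt0n subn_gt0 d_gt1 /=.
by elim: (d - 1).
Qed.

Lemma size_children_caterpillar k : 0 < k -> size (children (caterpillar k)) = d.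
Proof. by case: k => //= k _; rewrite size_nseq; lia. Qed.

Let K := c * (d - 1) + 1.

Fixpoint graft (t : rtree) : rtree :=
  let: Node ts := t in if ts is [::] then caterpillar c else Node (map graft ts).

Lemma graftE ts : ts != [::] -> graft (Node ts) = Node (map graft ts).
Proof. by case: ts. Qed.

Lemma tall_graft t : tall (graft t).
Proof.
elim/rtree_ind_mem: t => [[|y ys]] IH; first exact: big_depth_caterpillar.
rewrite graftE //; apply: leq_trans (IH y (mem_head _ _)) (big_depth_child _).
exact/map_f/mem_head.
Qed.

Lemma nleaves_graft t : nleaves (graft t) = nleaves t * K.
Proof.
elim/rtree_ind_mem: t => ts IH; have [->|ts_n0] := eqVneq ts [::].
  by rewrite /= nleaves_caterpillar mul1n.
rewrite graftE // !nleavesE ?big_map ?big_distrl //=; last first.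
  by rewrite -size_eq0 size_map size_eq0.
by rewrite big_seq [RHS]big_seq; apply: eq_bigr => x /IH.
Qed.

Lemma no_deg1_graft t : no_deg1 t -> no_deg1 (graft t) /\ 1 < size (children (graft t)).
Proof.
elim/rtree_ind_mem: t => ts IH; have [-> _|ts_n0] := eqVneq ts [::].
  by rewrite size_children_caterpillar // no_deg1_caterpillar.
rewrite graftE //= size_map => /andP [size_ne1 nd_ts]; split.
  rewrite size_ne1; apply/allP => _ /mapP [x x_in ->].
  exact: (IH x x_in (allP nd_ts x x_in)).1.
by case: ts ts_n0 {IH nd_ts} size_ne1 => [|? [|? ?]].
Qed.

Lemma subt_graft t u y : subt t u = Some y -> subt (graft t) u = Some (graft y).
Proof.
elim: u t => [|i u IH] [ts]; first by case=> <-.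
rewrite [subt _ _]/=; case: ifP => // i_lt; have ts_n0 : ts != [::] by case: ts i_lt.
rewrite graftE //= size_map i_lt (nth_map leaf) // (set_nth_default leaf (Node ts) i_lt).
exact: IH.
Qed.

Lemma tall_node_pad_graft r S u y : subt S u = Some y -> tall_node (pad r (graft S)) u.
Proof.
move/subt_graft; case: u => [_|i u /(subt_pad r) sub].
  by exists (pad r (graft S)); rewrite // /tall (leq_trans (tall_graft S)) ?big_depth_pad.
by exists (graft y); rewrite ?tall_graft.
Qed.

Lemma exists_tall_embedding n T S : universal n T -> nleaves S = n %/ K -> no_deg1 S ->
  exists2 f, embedding S T f & forall u, is_node S u -> tall_node T (f u).
Proof.
move=> univ_T leaves_S nd_S; have [nd_graft size_graft] := no_deg1_graft nd_S.
have [f f_emb] : exists f, embedding (pad (n %% K) (graft S)) T f.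
  apply/top_minorP/univ_T; last exact: no_deg1_pad.
  by rewrite nleaves_pad ?nleaves_graft ?leaves_S -?divn_eq // -size_eq0 -lt0n ltnW.
have tall_S u : is_node S u -> tall_node (pad (n %% K) (graft S)) u.
  by rewrite /is_node; case Su: subt => [y|] // _; exact: tall_node_pad_graft Su.
exists f => [|u /tall_S [x Px tall_x]].
  by apply: embedding_sub f_emb => u /tall_S [x Px _]; rewrite /is_node Px.
have [y Ty le_xy] := big_depth_embedding f_emb Px.
by exists y => //; apply: leq_trans le_xy.
Qed.

Lemma universal_trunk n T : universal n T -> universal (n %/ K) (trunk T).
Proof.
move=> univ_T S leaves_S nd_S.
have [f f_emb tall_f] := exists_tall_embedding univ_T leaves_S nd_S.
exact: top_minor_trunk f_emb tall_f.
Qed.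

Lemma tall_universal n T : universal n T -> K <= n -> tall T.
Proof.
move=> univ_T K_le; have m_gt0 : 0 < n %/ K by rewrite divn_gt0 // /K addn1.
have [f _ /(_ [::] erefl) [x Tx tall_x]] :=
  exists_tall_embedding univ_T (nleaves_star m_gt0) (no_deg1_star _).
exact: leq_trans tall_x (big_depth_subt Tx).
Qed.

Lemma u_le_ncritical n T : universal n T -> K <= n -> u (n %/ K) <= ncritical T.
Proof.
move=> univ_T K_le; rewrite -nleaves_trunk ?(tall_universal univ_T) //.
exact/u_le_nleaves/universal_trunk.
Qed.

End Trunk.

Lemma nbigE ts : nbig d (Node ts) = (d <= size ts) + \sum_(x <- ts) nbig d x.
Proof. by rewrite /= sumnE big_map. Qed.

Lemma sum_ncritical_le_nbig r t : uniq r -> \sum_(c <- r) ncritical c t <= nbig d t.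
Proof.
move=> uniq_r; elim/rtree_ind_mem: t => ts IH.
rewrite nbigE (eq_bigr _ (fun c _ => ncriticalE c ts)) big_split /= leq_add //.
  rewrite /critical /=; case: (d <= size ts); last by rewrite big1.
  exact: sum_eq_le1.
rewrite exchange_big big_seq [X in _ <= X]big_seq; apply: leq_sum => x x_in.
exact: IH.
Qed.

End BigDepth.

Theorem lemma6 (n d : nat) (T : rtree) :
  1 <= n -> 2 <= d -> universal n T ->
  \sum_(2 <= s < n.+2 | (s - 1) * (d - 1) + 1 <= n)
     u (n %/ ((s - 1) * (d - 1) + 1)) <= nbig d T.
Proof.
move=> _ d_gt1 univ_T.
rewrite -[2]/(1 + 1) big_addn.
under eq_bigl do rewrite addnK.
under eq_bigr do rewrite addnK.
apply: (@leq_trans (\sum_(1 <= c < n.+2 - 1 | c * (d - 1) + 1 <= n) ncritical d c T)).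
  rewrite big_nat_cond [X in _ <= X]big_nat_cond.
  apply: leq_sum => c /andP [/andP [c_gt0 _] K_le].
  exact: u_le_ncritical.
by rewrite -big_filter sum_ncritical_le_nbig // filter_uniq // iota_uniq.
Qed.
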